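(* Let $\sigma$ be a countable relational signature containing distinct relation symbols $Q,R$ with the arity of $R$ at least $2$. Let $X\subseteq\omega$ be such that there exists a $\sigma$-structure $\mathcal M$ with $Q^{\mathcal M}=\emptyset$ and $|s(f)|\in X$ for every $f\in\mathrm{Aut}(\mathcal M)$. Let $\mathbf P=\{\mathcal A\in\mathbf S_\sigma:|s(f)|\in X\text{ for every }f\in\mathrm{Aut}(\mathcal A)\}$. Then $\mathbf P$ is not expressible in $FO(\sigma)$; every abstract logic $L(\sigma)\geq FO(\sigma)$ that can express $\mathbf P$ fails the $\aleph_0$-compactness property; and every such logic which is moreover closed under negation has no sound and complete proof system.
   Context: $\omega$ is the set of finite cardinals. The support $s(f)$ of a function $f$ is the set of $a$ in its domain with $f(a)\neq a$. $\mathbf S_\sigma$ is the class of $\sigma$-structures, $\mathrm{Aut}(\mathcal A)$ the automorphism group. An abstract logic over $\sigma$ is a pair $(L(\sigma),\models_{L(\sigma)})$ with isomorphism-invariant satisfaction relation; a class is expressed by it if some sentence is satisfied exactly by its members; $L(\sigma)\geq FO(\sigma)$ means every first-order expressible class is $L(\sigma)$-expressible; $\aleph_0$-compactness: every countable finitely satisfiable set of sentences is satisfiable; closed under negation: each sentence has a sentence true exactly where it is false. A proof system $(\Pi,p,c)$ assigns to each $\pi$ a finite sequence of premisses and a conclusion; sound: premisses semantically entail the conclusion; complete: whenever $\Gamma$ entails $\psi$ some $\pi$ has conclusion $\psi$ and all premisses in $\Gamma$. *)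

From Stdlib Require Import List Arith.
Import ListNotations.
Set Implicit Arguments.

Definition fin (n : nat) : Type := {i : nat | i < n}.

Record signature := { sym : Type; arity : sym -> nat }.

Definition countable_sig (s : signature) : Prop :=
  exists e : sym s -> nat, forall a b, e a = e b -> a = b.

(* sigma-structures (nonempty universe, as usual in first-order model theory). *)
Record structure (s : signature) := {
  dom :> Type;
  dom_inh : dom;
  rel : forall r : sym s, (fin (arity s r) -> dom) -> Prop }.

Definition bijective (A B : Type) (h : A -> B) : Prop :=
  exists g : B -> A, (forall x, g (h x) = x) /\ (forall y, h (g y) = y).

Definition is_iso (s : signature) (A B : structure s) (h : A -> B) : Prop :=
  bijective h /\
  forall (r : sym s) (t : fin (arity s r) -> A),
    rel A r t <-> rel B r (fun i => h (t i)).

Definition automorphism (s : signature) (A : structure s) (f : A -> A) : Prop :=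
  is_iso A A f.

Definition support (T : Type) (f : T -> T) : T -> Prop := fun a => f a <> a.

Definition card_is (T : Type) (P : T -> Prop) (n : nat) : Prop :=
  exists l : list T, NoDup l /\ length l = n /\ forall x, In x l <-> P x.

Definition aut_supports_in (s : signature) (X : nat -> Prop) (A : structure s) : Prop :=
  forall f : A -> A, automorphism A f ->
    exists n, X n /\ card_is (support f) n.

Inductive formula (s : signature) : Type :=
| FRel : forall r : sym s, (fin (arity s r) -> nat) -> formula s
| FEq : nat -> nat -> formula s
| FFalse : formula s
| FNot : formula s -> formula s
| FAnd : formula s -> formula s -> formula s
| FOr : formula s -> formula s -> formula s
| FImp : formula s -> formula s -> formula s
| FAll : nat -> formula s -> formula s
| FEx : nat -> formula s -> formula s.

Definition update (T : Type) (env : nat -> T) (x : nat) (a : T) : nat -> T :=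
  fun y => if Nat.eqb y x then a else env y.

Fixpoint sat (s : signature) (A : structure s) (env : nat -> A) (phi : formula s) : Prop :=
  match phi with
  | @FRel _ r v => rel A r (fun i => env (v i))
  | @FEq _ x y => env x = env y
  | @FFalse _ => False
  | @FNot _ p => ~ sat A env p
  | @FAnd _ p q => sat A env p /\ sat A env q
  | @FOr _ p q => sat A env p \/ sat A env q
  | @FImp _ p q => sat A env p -> sat A env q
  | @FAll _ x p => forall a : A, sat A (update env x a) p
  | @FEx _ x p => exists a : A, sat A (update env x a) p
  end.

Fixpoint free (s : signature) (x : nat) (phi : formula s) : Prop :=
  match phi with
  | @FRel _ r v => exists i, v i = x
  | @FEq _ y z => y = x \/ z = x
  | @FFalse _ => False
  | @FNot _ p => free x p
  | FAnd p q | FOr p q | @FImp _ p q => free x p \/ free x q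
  | @FAll _ y p | @FEx _ y p => y <> x /\ free x p
  end.

Definition is_sentence (s : signature) (phi : formula s) : Prop :=
  forall x, ~ free x phi.

Definition sat_sentence (s : signature) (A : structure s) (phi : formula s) : Prop :=
  forall env : nat -> A, sat A env phi.

Definition FO_expressible (s : signature) (P : structure s -> Prop) : Prop :=
  exists phi : formula s, is_sentence phi /\
    forall A : structure s, sat_sentence A phi <-> P A.

Record abstract_logic (s : signature) := {
  lsent : Type;
  lsat : structure s -> lsent -> Prop;
  lsat_iso : forall (A B : structure s) (h : A -> B) (phi : lsent),
      is_iso A B h -> lsat A phi -> lsat B phi }.

Definition L_expressible (s : signature) (L : abstract_logic s) (P : structure s -> Prop) : Prop :=
  exists psi : lsent L, forall A : structure s, lsat L A psi <-> P A.

Definition L_ge_FO (s : signature) (L : abstract_logic s) : Prop :=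
  forall P : structure s -> Prop, FO_expressible P -> L_expressible L P.

Definition countable_set (T : Type) (G : T -> Prop) : Prop :=
  exists e : nat -> T, forall x, G x -> exists n, e n = x.

Definition L_satisfiable (s : signature) (L : abstract_logic s) (G : lsent L -> Prop) : Prop :=
  exists A : structure s, forall phi, G phi -> lsat L A phi.

Definition L_fin_satisfiable (s : signature) (L : abstract_logic s) (G : lsent L -> Prop) : Prop :=
  forall l : list (lsent L), (forall phi, In phi l -> G phi) ->
    exists A : structure s, forall phi, In phi l -> lsat L A phi.

Arguments L_satisfiable {s} L G.
Arguments L_fin_satisfiable {s} L G.
Definition aleph0_compact (s : signature) (L : abstract_logic s) : Prop :=
  forall G : lsent L -> Prop, countable_set G -> L_fin_satisfiable L G -> L_satisfiable L G.

Definition closed_neg (s : signature) (L : abstract_logic s) : Prop :=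
  forall phi : lsent L, exists psi : lsent L,
    forall A : structure s, lsat L A psi <-> ~ lsat L A phi.

Record proof_system (s : signature) (L : abstract_logic s) := {
  proofs : Type;
  premisses : proofs -> list (lsent L);
  conclusion : proofs -> lsent L }.

Definition L_entails (s : signature) (L : abstract_logic s) (G : lsent L -> Prop) (psi : lsent L) : Prop :=
  forall A : structure s, (forall phi, G phi -> lsat L A phi) -> lsat L A psi.

Arguments L_entails {s} L G psi.
Definition ps_sound (s : signature) (L : abstract_logic s) (PS : proof_system L) : Prop :=
  forall pi : proofs PS, L_entails L (fun phi => In phi (premisses PS pi)) (conclusion PS pi).

Definition ps_complete (s : signature) (L : abstract_logic s) (PS : proof_system L) : Prop :=
  forall (G : lsent L -> Prop) (psi : lsent L), L_entails L G psi ->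
    exists pi : proofs PS, conclusion PS pi = psi /\
      forall phi, In phi (premisses PS pi) -> G phi.

From Stdlib Require Import List Arith Lia ZArith Classical ClassicalEpsilon
  FunctionalExtensionality FinFun.
Import ListNotations.

(** Every structure has the identity automorphism, whose support is empty, so
    the existence of the structure [M] only matters through [X 0]; then every
    rigid structure lies in the class P, and no structure with an
    automorphism of infinite support does. All structures used are directed
    graphs coded in the relation symbol [R].

    - P is not first-order: the rigid chain (nat, successor) and the graph
      nat + Z with successor (which has the translation of Z, of infinite
      support) satisfy the same sentences, by an Ehrenfeucht-Fraisse
      back-and-forth argument on partial isomorphisms up to a radius.
    - Logics expressing P are not countably compact: the first-order theory
      "graph-like, in- and out-degree at most 1, two start points, every
      start point begins arbitrarily long paths" together with P is
      finitely satisfiable by the rigid graphs 0 -> ... -> N, N+1 -> ...,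
      but any model contains two disjoint infinite chains, and swapping them
      is an automorphism of infinite support.
    - A sound and complete proof system would make such a logic compact. *)

(** A self-map with an injective sequence of non-fixed points has infinite
    support: no list of length [n] can enumerate it. *)
Lemma support_not_finite {T : Type} (f : T -> T) (h : nat -> T) :
  (forall i j, h i = h j -> i = j) -> (forall i, f (h i) <> h i) ->
  forall n, ~ card_is (support f) n.
Proof.
  intros Hinj Hmoved n (l & Hnd & Hlen & Hin).
  assert (Hnd' : NoDup (map h (seq 0 (S n)))).
  { apply Injective_map_NoDup; [intros i j; apply Hinj | apply seq_NoDup]. }
  assert (Hincl : incl (map h (seq 0 (S n))) l).
  { intros x Hx. apply in_map_iff in Hx. destruct Hx as (i & <- & _).
    apply Hin, Hmoved. }
  pose proof (NoDup_incl_length Hnd' Hincl) as Hle.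
  rewrite length_map, length_seq in Hle. lia.
Qed.

Lemma card_support_fixpoints {T : Type} (f : T -> T) :
  (forall x, f x = x) -> card_is (support f) 0.
Proof.
  intros Hid. exists []. repeat split; [constructor | | ]; simpl; try tauto.
  intros Hx. apply Hx, Hid.
Qed.

Lemma card_support_fixpoints_unique {T : Type} (f : T -> T) (n : nat) :
  (forall x, f x = x) -> card_is (support f) n -> n = 0.
Proof.
  intros Hid ([|x l] & _ & Hlen & Hin); simpl in Hlen; auto.
  exfalso. apply (proj1 (Hin x)); simpl; auto.
Qed.

(** Every structure has the identity automorphism, of support size 0; hence
    the class [aut_supports_in X] is nonempty only if [X 0]. *)
Lemma X_contains_0 {s : signature} (X : nat -> Prop) (M : structure s) :
  aut_supports_in X M -> X 0.
Proof.
  intros HM. destruct (HM (fun x => x)) as (n & HXn & Hcard).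
  - split; [exists (fun x => x); auto | intros; reflexivity].
  - rewrite <- (card_support_fixpoints_unique (fun x : dom M => x) n (fun _ => eq_refl) Hcard).
    exact HXn.
Qed.

Lemma rigid_aut_supports_in {s : signature} (X : nat -> Prop) (A : structure s) :
  X 0 -> (forall f : A -> A, automorphism A f -> forall x, f x = x) ->
  aut_supports_in X A.
Proof.
  intros H0 Hrigid f Hf. exists 0. split; auto.
  apply card_support_fixpoints, Hrigid, Hf.
Qed.

(** * Directed graphs as sigma-structures

    A binary edge relation [e] is coded in the relation symbol [R] (arity at
    least 2) by the tuples [pat x y = (x, y, y, ..., y)]; all other symbols
    are interpreted as empty. *)

Definition pat {D : Type} {n : nat} (x y : D) (i : fin n) : D :=
  if Nat.eqb (proj1_sig i) 0 then x else y.

Lemma fin_eq {n : nat} (i j : fin n) : proj1_sig i = proj1_sig j -> i = j.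
Proof.
  destruct i as [i Hi], j as [j Hj]; simpl; intros ->.
  f_equal; apply Peano_dec.le_unique.
Qed.

Definition pos0 {n : nat} (H : 2 <= n) : fin n := exist _ 0 (Nat.lt_le_trans 0 2 n ltac:(lia) H).
Definition pos1 {n : nat} (H : 2 <= n) : fin n := exist _ 1 (Nat.lt_le_trans 1 2 n ltac:(lia) H).

Lemma pat_inj {D : Type} {n : nat} (H : 2 <= n) {x y x' y' : D} :
  (forall i : fin n, pat x y i = pat x' y' i) -> x = x' /\ y = y'.
Proof. intros Hp. exact (conj (Hp (pos0 H)) (Hp (pos1 H))). Qed.

Lemma pat_map {D D' : Type} {n : nat} (f : D -> D') (x y : D) (i : fin n) :
  f (pat x y i) = pat (f x) (f y) i.
Proof. unfold pat; destruct (Nat.eqb _ _); reflexivity. Qed.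

Lemma rel_ext {s : signature} {A : structure s} {r : sym s} {t t' : fin (arity s r) -> A} :
  (forall i, t i = t' i) -> rel A r t -> rel A r t'.
Proof. intros H; replace t' with t; auto. extensionality i; auto. Qed.

Section Graphs.
Context {s : signature} (R : sym s) (HR : 2 <= arity s R).

Definition graph_structure {D : Type} (d : D) (e : D -> D -> Prop) : structure s :=
  {| dom := D; dom_inh := d;
     rel := fun r t => exists x y, (forall i, t i = pat x y i) /\ r = R /\ e x y |}.

Definition edge (A : structure s) (x y : A) : Prop := rel A R (pat x y).

Definition start (A : structure s) (a : A) : Prop := ~ exists y, edge A y a.
Definition terminal (A : structure s) (a : A) : Prop := ~ exists y, edge A a y.

Lemma edge_graph {D : Type} (d : D) (e : D -> D -> Prop) (x y : D) :
  edge (graph_structure d e) x y <-> e x y.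
Proof.
  simpl; split.
  - intros (x' & y' & Hp & _ & He). destruct (pat_inj HR Hp) as [-> ->]; auto.
  - intros He; exists x, y; auto.
Qed.

Definition graph_like (A : structure s) : Prop :=
  (forall t, rel A R t -> forall j, t j = pat (t (pos0 HR)) (t (pos1 HR)) j) /\
  (forall r, r <> R -> forall t : fin (arity s r) -> A, ~ rel A r t).

Lemma graph_structure_graph_like {D : Type} (d : D) (e : D -> D -> Prop) :
  graph_like (graph_structure d e).
Proof.
  split.
  - intros t (x & y & Hp & _ & _) j. rewrite !Hp. reflexivity.
  - intros r Hr t (x & y & _ & Hr' & _). contradiction.
Qed.

Lemma automorphism_edge (A : structure s) (f : A -> A) :
  automorphism A f -> forall x y, edge A x y <-> edge A (f x) (f y).
Proof.
  intros [_ Hrel] x y. unfold edge. rewrite (Hrel R (pat x y)).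
  split; apply rel_ext; intro i; [apply pat_map | symmetry; apply pat_map].
Qed.

Lemma automorphism_start (A : structure s) (f : A -> A) (a : A) :
  automorphism A f -> start A a -> start A (f a).
Proof.
  intros Haut Ha [y Hy]. pose proof Haut as [[g [_ Hfg]] _].
  apply Ha. exists (g y). apply (automorphism_edge A f Haut). rewrite Hfg. exact Hy.
Qed.

Lemma automorphism_terminal (A : structure s) (f : A -> A) (a : A) :
  automorphism A f -> terminal A a -> terminal A (f a).
Proof.
  intros Haut Ha [y Hy]. pose proof Haut as [[g [_ Hfg]] _].
  apply Ha. exists (g y). apply (automorphism_edge A f Haut). rewrite Hfg. exact Hy.
Qed.

Lemma automorphism_injective {A : structure s} (f : A -> A) :
  automorphism A f -> forall x y, f x = f y -> x = y.
Proof.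
  intros [[g [Hgf _]] _] x y Hxy. rewrite <- (Hgf x), <- (Hgf y), Hxy. reflexivity.
Qed.

Lemma graph_like_automorphism (A : structure s) (f g : A -> A) :
  graph_like A -> (forall x, g (f x) = x) -> (forall y, f (g y) = y) ->
  (forall x y, edge A x y <-> edge A (f x) (f y)) -> automorphism A f.
Proof.
  intros [Hpat Hempty] Hgf Hfg Hedge. split; [exists g; auto |].
  intros r t. destruct (classic (r = R)) as [-> | Hr].
  2: split; intros Ht; exfalso; exact (Hempty r Hr _ Ht).
  split; intros Ht.
  - assert (He : edge A (f (t (pos0 HR))) (f (t (pos1 HR)))).
    { apply (proj1 (Hedge _ _)). exact (rel_ext (Hpat t Ht) Ht). }
    revert He; apply rel_ext. intro j. rewrite (Hpat t Ht j). symmetry. apply pat_map.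
  - pose proof (Hpat _ Ht) as Hft; cbv beta in Hft.
    assert (He : edge A (t (pos0 HR)) (t (pos1 HR))).
    { apply (proj2 (Hedge _ _)). exact (rel_ext Hft Ht). }
    revert He; apply rel_ext. intro j.
    rewrite <- (Hgf (t j)), Hft, (pat_map g), !Hgf. reflexivity.
Qed.

Lemma graph_like_involution (A : structure s) (f : A -> A) :
  graph_like A -> (forall x, f (f x) = x) ->
  (forall x y, edge A x y -> edge A (f x) (f y)) -> automorphism A f.
Proof.
  intros HA Hff Hedge. apply (graph_like_automorphism A f f HA Hff Hff).
  intros x y; split; [apply Hedge |]. intros H. rewrite <- (Hff x), <- (Hff y). auto.
Qed.

End Graphs.

(** * Rigid successor graphs on [nat]

    Both rigid structures used below are successor graphs: [omega_chain] is
    the chain 0 -> 1 -> 2 -> ..., and [cut_chain N] is the disjoint union of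
    the finite chain 0 -> ... -> N with the infinite chain N+1 -> N+2 -> .... *)

Section SuccessorGraphs.
Context {s : signature} (R : sym s) (HR : 2 <= arity s R).

Definition nat_succ (x y : nat) : Prop := y = S x.
Definition omega_chain : structure s := graph_structure R 0 nat_succ.
Definition cut_chain (N : nat) : structure s :=
  graph_structure R 0 (fun x y => y = S x /\ x <> N).

Lemma successor_fix_step (e : nat -> nat -> Prop) (f : nat -> nat) (x : nat) :
  (forall a b, e a b -> b = S a) -> automorphism (graph_structure R 0 e) f ->
  e x (S x) -> (f x = x <-> f (S x) = S x).
Proof.
  intros Hsucc Haut Hx.
  apply (edge_graph R HR 0 e) in Hx.
  apply (automorphism_edge R (graph_structure R 0 e) f Haut) in Hx.
  apply (edge_graph R HR 0 e), Hsucc in Hx.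
  lia.
Qed.

(** [omega_chain] is rigid: its unique start 0 is fixed, and then so is
    every successor. *)
Lemma omega_chain_rigid (f : nat -> nat) :
  automorphism omega_chain f -> forall x, f x = x.
Proof.
  intros Haut.
  assert (H0 : f 0 = 0).
  { assert (Hstart : start R omega_chain (f 0)).
    { apply (automorphism_start R omega_chain f 0 Haut).
      intros [y Hy]. apply (edge_graph R HR) in Hy. discriminate. }
    destruct (f 0) as [|m]; [reflexivity|].
    exfalso. apply Hstart. exists m. apply (edge_graph R HR). reflexivity. }
  induction x as [|x IH]; [exact H0|].
  apply (successor_fix_step nat_succ f x); unfold nat_succ; auto.
Qed.

(** [cut_chain N] is rigid: its unique terminal point [N] is fixed, hence so
    is the finite chain below it; then [N+1], the only other start, is fixed,
    hence so is the infinite chain above it. *)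
Lemma cut_chain_rigid (N : nat) (f : nat -> nat) :
  automorphism (cut_chain N) f -> forall x, f x = x.
Proof.
  intros Haut.
  set (e := fun x y => y = S x /\ x <> N).
  assert (Hsucc : forall a b, e a b -> b = S a) by (intros a b []; auto).
  assert (HN : f N = N).
  { assert (Hterm : terminal R (cut_chain N) (f N)).
    { apply (automorphism_terminal R (cut_chain N) f N Haut).
      intros [y Hy]. apply (edge_graph R HR) in Hy. unfold e in Hy. lia. }
    destruct (Nat.eq_dec (f N) N) as [|Hne]; [assumption|].
    exfalso. apply Hterm. exists (S (f N)). apply (edge_graph R HR). split; auto. }
  assert (Hbelow : forall d, d <= N -> f (N - d) = N - d).
  { induction d as [|d IH]; intros Hd; [rewrite Nat.sub_0_r; exact HN|].
    replace (N - d) with (S (N - S d)) in IH by lia.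
    apply (successor_fix_step e f (N - S d) Hsucc Haut); [split; lia | apply IH; lia]. }
  assert (HSN : f (S N) = S N).
  { assert (Hstart : start R (cut_chain N) (f (S N))).
    { apply (automorphism_start R (cut_chain N) f (S N) Haut).
      intros [y Hy]. apply (edge_graph R HR) in Hy. unfold e in Hy. lia. }
    assert (H0 : f 0 = 0) by (pose proof (Hbelow N (le_n N)) as H; rewrite Nat.sub_diag in H; exact H).
    destruct (f (S N)) as [|p] eqn:Ep.
    - rewrite <- H0 in Ep. apply (automorphism_injective (A := cut_chain N) f Haut) in Ep. discriminate.
    - destruct (Nat.eq_dec p N) as [->|Hp]; [reflexivity|].
      exfalso. apply Hstart. exists p. apply (edge_graph R HR). split; auto. }
  assert (Habove : forall j, f (S N + j) = S N + j).
  { induction j as [|j IH]; [rewrite Nat.add_0_r; exact HSN|].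
    rewrite Nat.add_succ_r.
    apply (successor_fix_step e f (S N + j) Hsucc Haut); [split; lia | exact IH]. }
  intros x. destruct (le_lt_dec x N).
  - replace x with (N - (N - x)) by lia. apply Hbelow; lia.
  - replace x with (S N + (x - S N)) by lia. apply Habove.
Qed.

End SuccessorGraphs.

(** * The class is not first-order: an Ehrenfeucht-Fraisse argument

    Its translation on the [Z] part is an automorphism with infinite
    support, so it lies outside the class, whereas the rigid [omega_chain]
    lies inside; yet both satisfy the same first-order sentences. *)

Definition omegaZ_succ (b b' : nat + Z) : Prop :=
  match b, b' with
  | inl n, inl m => m = S n
  | inr z, inr w => w = (z + 1)%Z
  | _, _ => False
  end.

Definition omegaZ_translate (d : Z) (b : nat + Z) : nat + Z :=
  match b with inl n => inl n | inr z => inr (z + d)%Z end.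

Section OmegaPlusZ.
Context {s : signature} (R : sym s) (HR : 2 <= arity s R).

Definition omega_plus_Z : structure s := graph_structure R (inl 0) omegaZ_succ.

Lemma omega_plus_Z_not_in_class (X : nat -> Prop) : ~ aut_supports_in X omega_plus_Z.
Proof.
  intros HP.
  assert (Haut : automorphism omega_plus_Z (omegaZ_translate 1)).
  { apply (graph_like_automorphism R HR omega_plus_Z _ (omegaZ_translate (-1)));
      [apply graph_structure_graph_like | intros [x|x] .. |].
    1-4: simpl; f_equal; lia.
    intros x y. unfold omega_plus_Z. rewrite !(edge_graph R HR). destruct x, y; simpl; lia. }
  destruct (HP _ Haut) as (n & _ & Hcard).
  apply (support_not_finite _ (fun i => inr (Z.of_nat i)) ) in Hcard; auto.
  - intros i j Hij. injection Hij. lia.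
  - intros i Hi. injection Hi. lia.
Qed.

End OmegaPlusZ.

(** A finite assignment [y |-> (ea y, eb y)] of points of [omega_chain] and
    [omega_plus_Z] is a partial isomorphism up to radius [r] when each pair
    either agrees near the origin or lies far from it ([origin_match]), and
    any two pairs either have the same signed offset or are both far apart
    ([offset_match]). Halving the radius, such an assignment can be extended
    by any new point on either side; for radius at least 2 it respects
    equality and edges. *)

Definition origin_match (r : Z) (a : nat) (b : nat + Z) : Prop :=
  match b with
  | inl n => n = a \/ (r <= Z.of_nat n /\ r <= Z.of_nat a)%Z
  | inr _ => (r <= Z.of_nat a)%Z
  end.

Definition offset (b b' : nat + Z) : option Z :=
  match b, b' with
  | inl n, inl m => Some (Z.of_nat m - Z.of_nat n)%Z
  | inr z, inr w => Some (w - z)%Z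
  | _, _ => None
  end.

Definition offset_match (r : Z) (a a' : nat) (b b' : nat + Z) : Prop :=
  match offset b b' with
  | Some d => d = (Z.of_nat a' - Z.of_nat a)%Z \/
              (r <= Z.abs d /\ r <= Z.abs (Z.of_nat a' - Z.of_nat a))%Z
  | None => (r <= Z.abs (Z.of_nat a' - Z.of_nat a))%Z
  end.

Definition ef_invariant (r : Z) (V : list nat) (ea : nat -> nat) (eb : nat -> nat + Z) : Prop :=
  (forall y, In y V -> origin_match r (ea y) (eb y)) /\
  (forall y z, In y V -> In z V -> offset_match r (ea y) (ea z) (eb y) (eb z)).

Lemma offset_match_sym r a a' b b' : offset_match r a a' b b' -> offset_match r a' a b' b.
Proof. unfold offset_match, offset; destruct b, b'; lia. Qed.

Lemma offset_match_refl r a b : (0 <= r)%Z -> offset_match r a a b b.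
Proof. unfold offset_match, offset; destruct b; lia. Qed.

Lemma origin_match_mono r r' a b : (r' <= r)%Z -> origin_match r a b -> origin_match r' a b.
Proof. unfold origin_match; destruct b; lia. Qed.

Lemma offset_match_mono r r' a a' b b' :
  (r' <= r)%Z -> offset_match r a a' b b' -> offset_match r' a a' b b'.
Proof. unfold offset_match, offset; destruct b, b'; lia. Qed.

Lemma offset_match_eq r a a' b b' : (2 <= r)%Z -> offset_match r a a' b b' -> (a = a' <-> b = b').
Proof.
  unfold offset_match, offset; destruct b as [n|z], b' as [m|w]; intros Hr H; split; intro E;
    try discriminate; try (injection E; intro E'); subst; try lia; f_equal; lia.
Qed.

Lemma offset_match_succ r a a' b b' :
  (2 <= r)%Z -> offset_match r a a' b b' -> (nat_succ a a' <-> omegaZ_succ b b').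
Proof.
  unfold offset_match, offset, nat_succ, omegaZ_succ;
    destruct b as [n|z], b' as [m|w]; intros Hr H; split; intro E; subst; lia.
Qed.

(** Sizes of the points used so far, to find fresh far-away points. *)
Definition z_extent (V : list nat) (eb : nat -> nat + Z) : Z :=
  fold_right (fun y acc => Z.abs (match eb y with inl _ => 0 | inr z => z end) + acc)%Z 0%Z V.
Definition nat_extent (V : list nat) (ea : nat -> nat) : Z :=
  fold_right (fun y acc => Z.of_nat (ea y) + acc)%Z 0%Z V.

Lemma z_extent_ge V eb y :
  In y V -> (Z.abs (match eb y with inl _ => 0 | inr z => z end) <= z_extent V eb)%Z.
Proof.
  induction V as [|v V IH]; simpl; [tauto|].
  assert (0 <= z_extent V eb)%Z by (clear; induction V; simpl; lia).
  intros [->|H']; [lia|]. specialize (IH H'). lia.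
Qed.

Lemma nat_extent_ge V ea y : In y V -> (0 <= nat_extent V ea /\ Z.of_nat (ea y) <= nat_extent V ea)%Z.
Proof.
  induction V as [|v V IH]; simpl; [tauto|].
  assert (0 <= nat_extent V ea)%Z by (clear; induction V; simpl; lia).
  intros [->|H']; [lia|]. specialize (IH H'). lia.
Qed.

(** Forth: a new point [a] of [omega_chain] is copied near the origin, or at
    the same offset from a nearby used point, or far from everything. *)
Lemma ef_forth r V ea eb a : (1 <= r)%Z -> ef_invariant (2 * r) V ea eb ->
  exists b, origin_match r a b /\ forall z, In z V -> offset_match r a (ea z) b (eb z).
Proof.
  intros Hr [H1 H2].
  destruct (Z_lt_le_dec (Z.of_nat a) r) as [Ha|Ha].
  - exists (inl a). split; [left; auto|].
    intros z Hz. specialize (H1 z Hz). unfold origin_match, offset_match, offset in *.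
    destruct (eb z); lia.
  - destruct (classic (exists y, In y V /\ (Z.abs (Z.of_nat a - Z.of_nat (ea y)) < r)%Z))
      as [(y & Hy & Hd)|Hfar].
    + exists (match eb y with
              | inl n => inl (Z.to_nat (Z.of_nat n + (Z.of_nat a - Z.of_nat (ea y))))
              | inr z => inr (z + (Z.of_nat a - Z.of_nat (ea y)))%Z end).
      pose proof (H1 y Hy) as H1y. split.
      * unfold origin_match in *. destruct (eb y); lia.
      * intros z Hz. pose proof (H2 y z Hy Hz). pose proof (H1 z Hz).
        unfold origin_match, offset_match, offset in *. destruct (eb y), (eb z); lia.
    + exists (inr (r + z_extent V eb)%Z). split; [simpl; lia|].
      intros z Hz.
      assert (r <= Z.abs (Z.of_nat a - Z.of_nat (ea z)))%Z
        by (apply Z.nlt_ge; intros Hlt; apply Hfar; eauto).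
      pose proof (z_extent_ge V eb z Hz).
      unfold offset_match, offset in *. destruct (eb z); lia.
Qed.

Lemma ef_back r V ea eb b : (1 <= r)%Z -> ef_invariant (2 * r) V ea eb ->
  exists a, origin_match r a b /\ forall z, In z V -> offset_match r a (ea z) b (eb z).
Proof.
  intros Hr [H1 H2].
  destruct (classic (exists m, b = inl m /\ (Z.of_nat m < r)%Z)) as [(m & -> & Hm)|Hnear].
  - exists m. split; [left; auto|].
    intros z Hz. specialize (H1 z Hz). unfold origin_match, offset_match, offset in *.
    destruct (eb z); lia.
  - destruct (classic (exists y d, In y V /\ offset (eb y) b = Some d /\ (Z.abs d < r)%Z))
      as [(y & d & Hy & Hdb & Hd)|Hfar].
    + exists (Z.to_nat (Z.of_nat (ea y) + d)).
      pose proof (H1 y Hy) as H1y. split.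
      * unfold origin_match, offset in *. destruct (eb y), b; try discriminate;
          injection Hdb; intro; lia.
      * intros z Hz. pose proof (H2 y z Hy Hz). pose proof (H1 z Hz).
        unfold origin_match, offset_match, offset in *. destruct (eb y), (eb z), b;
          try discriminate; injection Hdb; intro; lia.
    + exists (Z.to_nat (r + nat_extent V ea)). split.
      * assert (0 <= nat_extent V ea)%Z by (clear; induction V; simpl; lia).
        unfold origin_match. destruct b as [m|w]; [|lia].
        right. destruct (Z_lt_le_dec (Z.of_nat m) r); [|lia]. exfalso; apply Hnear; eauto.
      * intros z Hz. pose proof (nat_extent_ge V ea z Hz).
        assert (Hd : forall d, offset b (eb z) = Some d -> (r <= Z.abs d)%Z).
        { intros d Hd. apply Z.nlt_ge. intros Hlt. apply Hfar. exists z, (- d)%Z.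
          split; [auto|]. split; [|lia].
          unfold offset in *; destruct b, (eb z); try discriminate; injection Hd; intro;
            f_equal; lia. }
        unfold offset_match. destruct (offset b (eb z)) eqn:E.
        -- right; split; [apply Hd; auto | lia].
        -- lia.
Qed.

Lemma ef_extend r V ea eb x a b : (0 <= r)%Z -> ef_invariant (2 * r) V ea eb ->
  origin_match r a b -> (forall z, In z V -> offset_match r a (ea z) b (eb z)) ->
  ef_invariant r (x :: V) (update ea x a) (update eb x b).
Proof.
  intros Hr [H1 H2] Hc1 Hc2. split.
  - intros y Hy. unfold update. destruct (Nat.eqb_spec y x); auto.
    destruct Hy as [->|Hy]; [congruence|].
    apply origin_match_mono with (2 * r)%Z; [lia|auto].
  - intros y z Hy Hz. unfold update.
    destruct (Nat.eqb_spec y x), (Nat.eqb_spec z x).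
    + apply offset_match_refl; auto.
    + destruct Hz as [->|Hz]; [congruence|]. auto.
    + destruct Hy as [->|Hy]; [congruence|]. apply offset_match_sym; auto.
    + destruct Hy as [->|Hy]; [congruence|]. destruct Hz as [->|Hz]; [congruence|].
      apply offset_match_mono with (2 * r)%Z; [lia|auto].
Qed.

Lemma graph_atom_transfer {s : signature} {R : sym s} (HR : 2 <= arity s R)
  {DA DB : Type} (dA : DA) (dB : DB) (eA : DA -> DA -> Prop) (eB : DB -> DB -> Prop)
  (r : sym s) (v : fin (arity s r) -> nat) (ea : nat -> DA) (eb : nat -> DB) :
  (forall i j, ea (v i) = ea (v j) -> eb (v i) = eb (v j)) ->
  (forall i j, eA (ea (v i)) (ea (v j)) -> eB (eb (v i)) (eb (v j))) ->
  rel (graph_structure R dA eA) r (fun i => ea (v i)) ->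
  rel (graph_structure R dB eB) r (fun i => eb (v i)).
Proof.
  intros Heq Hedge (x & y & Hp & Hr & Hxy). simpl. subst r.
  pose proof (Hp (pos0 HR)) as Hx. pose proof (Hp (pos1 HR)) as Hy.
  unfold pat in Hx, Hy; simpl in Hx, Hy.
  exists (eb (v (pos0 HR))), (eb (v (pos1 HR))). split; [|split; [reflexivity|]].
  - intro i. unfold pat. destruct (Nat.eqb_spec (proj1_sig i) 0) as [E|E].
    + f_equal. f_equal. apply fin_eq. simpl. auto.
    + apply Heq. rewrite Hp, Hy. unfold pat. apply Nat.eqb_neq in E. rewrite E. reflexivity.
  - apply Hedge. rewrite Hx, Hy. auto.
Qed.

Fixpoint quantifier_depth {s : signature} (phi : formula s) : nat :=
  match phi with
  | FNot p => quantifier_depth p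
  | FAnd p q | FOr p q | FImp p q => Nat.max (quantifier_depth p) (quantifier_depth q)
  | FAll _ p | FEx _ p => S (quantifier_depth p)
  | _ => 0
  end.

(** Radius [2^(k+1)] suffices for formulas of quantifier depth [k]. *)
Fixpoint ef_radius (k : nat) : Z := match k with 0 => 2%Z | S k => (2 * ef_radius k)%Z end.

Lemma ef_radius_ge k : (2 <= ef_radius k)%Z.
Proof. induction k; cbn [ef_radius]; lia. Qed.

Lemma free_under_binder {s : signature} (x : nat) (p : formula s) (V : list nat) :
  (forall y, x <> y /\ free y p -> In y V) -> forall y, free y p -> In y (x :: V).
Proof.
  intros H y Hy. destruct (Nat.eq_dec x y) as [->|Hne]; [left; auto | right; auto].
Qed.

Theorem ef_equivalence {s : signature} {R : sym s} (HR : 2 <= arity s R) (phi : formula s) :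
  forall k V ea eb, (forall y, free y phi -> In y V) -> quantifier_depth phi <= k ->
  ef_invariant (ef_radius k) V ea eb ->
  (sat (omega_chain R) ea phi <-> sat (omega_plus_Z R) eb phi).
Proof.
  induction phi as [r v|x y| |p IH|p IHp q IHq|p IHp q IHq|p IHp q IHq|x p IH|x p IH];
    intros k V ea eb Hfree Hdepth HI; pose proof (ef_radius_ge k) as Hrk;
    simpl in Hdepth |- *.
  5-7: assert (E1 : sat (omega_chain R) ea p <-> sat (omega_plus_Z R) eb p)
      by (apply (IHp k V); auto; [intros; apply Hfree; simpl; auto | lia]);
    assert (E2 : sat (omega_chain R) ea q <-> sat (omega_plus_Z R) eb q)
      by (apply (IHq k V); auto; [intros; apply Hfree; simpl; auto | lia]);
    tauto.
  (* quantifiers: a pair chosen by back-and-forth keeps the invariant *)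
  5-6: destruct k as [|k]; [lia|]; simpl in HI; pose proof (ef_radius_ge k);
    assert (Hfree' := free_under_binder x p V Hfree);
    assert (Hstep : forall a b, origin_match (ef_radius k) a b ->
              (forall z, In z V -> offset_match (ef_radius k) a (ea z) b (eb z)) ->
              (sat (omega_chain R) (update ea x a) p <->
               sat (omega_plus_Z R) (update eb x b) p))
      by (intros a b Ha Hb; apply (IH k (x :: V)); auto; [lia | apply ef_extend; auto; lia]).
  - assert (HV : forall i, In (v i) V) by (intro i; apply Hfree; simpl; eauto).
    destruct HI as [_ H2].
    split; [apply (graph_atom_transfer HR 0 (inl 0) nat_succ omegaZ_succ) |
            apply (graph_atom_transfer HR (inl 0) 0 omegaZ_succ nat_succ)]; intros i j;
      pose proof (H2 (v i) (v j) (HV i) (HV j)) as C;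
      first [apply (offset_match_eq _ _ _ _ _ Hrk C) | apply (offset_match_succ _ _ _ _ _ Hrk C)].
  - destruct HI as [_ H2]. apply (offset_match_eq _ _ _ _ _ Hrk).
    apply H2; apply Hfree; simpl; auto.
  - tauto.
  - rewrite (IH k V ea eb); auto; tauto.
  - split.
    + intros Hs b. destruct (ef_back (ef_radius k) V ea eb b ltac:(lia) HI) as (a & Ha & Hb).
      apply (Hstep a b Ha Hb), Hs.
    + intros Hs a. destruct (ef_forth (ef_radius k) V ea eb a ltac:(lia) HI) as (b & Ha & Hb).
      apply (Hstep a b Ha Hb), Hs.
  - split.
    + intros [a Hs]. destruct (ef_forth (ef_radius k) V ea eb a ltac:(lia) HI) as (b & Ha & Hb).
      exists b. apply (Hstep a b Ha Hb), Hs.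
    + intros [b Hs]. destruct (ef_back (ef_radius k) V ea eb b ltac:(lia) HI) as (a & Ha & Hb).
      exists a. apply (Hstep a b Ha Hb), Hs.
Qed.

Lemma not_FO_expressible {s : signature} {R : sym s} (HR : 2 <= arity s R) (X : nat -> Prop) :
  X 0 -> ~ FO_expressible (@aut_supports_in s X).
Proof.
  intros H0 (phi & Hsent & Hphi).
  apply (omega_plus_Z_not_in_class R HR X), Hphi.
  assert (HA : sat_sentence (omega_chain R) phi)
    by (apply Hphi, rigid_aut_supports_in, omega_chain_rigid; auto).
  intro eb. apply (ef_equivalence HR phi (quantifier_depth phi) [] (fun _ => 0) eb).
  - intros y Hy. exfalso; apply (Hsent y Hy).
  - lia.
  - split; simpl; tauto.
  - apply HA.
Qed.

(** * The class is not compact: a first-order theory of two infinite chains *)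

Section TwoChainsTheory.
Context {s : signature} (R : sym s).

Definition edge_atom (j k : nat) : formula s := FRel _ R (pat j k).
Definition FTrue : formula s := FNot (FFalse _).

Definition out_functional : formula s :=
  FAll 0 (FAll 1 (FAll 2 (FImp (edge_atom 0 1) (FImp (edge_atom 0 2) (FEq _ 1 2))))).
Definition in_functional : formula s :=
  FAll 0 (FAll 1 (FAll 2 (FImp (edge_atom 1 0) (FImp (edge_atom 2 0) (FEq _ 1 2))))).
Definition start_formula (j w : nat) : formula s := FNot (FEx w (edge_atom w j)).
Definition two_starts : formula s :=
  FEx 0 (FEx 1 (FAnd (FNot (FEq _ 0 1)) (FAnd (start_formula 0 2) (start_formula 1 2)))).
Fixpoint path_formula (n k : nat) : formula s :=
  match n with
  | 0 => FTrue
  | S n => FEx (S k) (FAnd (edge_atom k (S k)) (path_formula n (S k)))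
  end.
Definition starts_have_paths (n : nat) : formula s :=
  FAll 0 (FImp (start_formula 0 1) (path_formula n 0)).

Fixpoint forall_first (k : nat) (phi : formula s) : formula s :=
  match k with 0 => phi | S k => forall_first k (FAll k phi) end.
Definition first_vars (k : nat) : fin k -> nat := fun i => proj1_sig i.

Definition shape_axiom (i : nat) : formula s :=
  if andb (1 <=? i) (i <? arity s R)
  then forall_first (arity s R) (FImp (FRel _ R (first_vars _)) (FEq _ i 1))
  else FTrue.
Definition empty_axiom (o : option (sym s)) : formula s :=
  match o with
  | Some S0 => forall_first (arity s S0) (FNot (FRel _ S0 (first_vars _)))
  | None => FTrue
  end.

End TwoChainsTheory.
Arguments edge_atom : simpl never.

Section TheorySemantics.
Context {s : signature} (R : sym s) (A : structure s).

Fixpoint has_path (n : nat) (x : A) : Prop :=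
  match n with 0 => True | S n => exists y, edge R A x y /\ has_path n y end.

Lemma update_same {T : Type} (env : nat -> T) x a : update env x a x = a.
Proof. unfold update; rewrite Nat.eqb_refl; auto. Qed.
Lemma update_other {T : Type} (env : nat -> T) x a y : y <> x -> update env x a y = env y.
Proof. intros H; unfold update; apply Nat.eqb_neq in H; rewrite H; auto. Qed.

Lemma sat_edge_atom env j k : sat A env (edge_atom R j k) <-> edge R A (env j) (env k).
Proof.
  unfold edge_atom, edge; simpl.
  split; apply rel_ext; intro i; [apply pat_map | symmetry; apply pat_map].
Qed.

Lemma sat_FTrue : sat_sentence A (FTrue (s := s)).
Proof. intros env; cbn; auto. Qed.

Lemma sat_start_formula env j w :
  w <> j -> (sat A env (start_formula R j w) <-> start R A (env j)).
Proof.
  intros Hw. unfold start_formula, start. cbn [sat].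
  split; intros H [a Ha]; apply H; exists a.
  - rewrite sat_edge_atom, update_same, update_other; auto.
  - rewrite sat_edge_atom, update_same, update_other in Ha; auto.
Qed.

Lemma sat_path_formula n : forall k env, sat A env (path_formula R n k) <-> has_path n (env k).
Proof.
  induction n as [|n IH]; intros k env; cbn [sat path_formula has_path].
  - unfold FTrue; simpl; tauto.
  - split; intros [a Ha]; exists a.
    + rewrite sat_edge_atom, IH, update_same, update_other in Ha by lia. exact Ha.
    + rewrite sat_edge_atom, IH, update_same, update_other by lia. exact Ha.
Qed.

Lemma sat_out_functional :
  sat_sentence A (out_functional R) <-> forall x y z : A, edge R A x y -> edge R A x z -> y = z.
Proof.
  unfold sat_sentence, out_functional. cbn [sat]. setoid_rewrite sat_edge_atom.
  unfold update; simpl. split; intros H.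
  - intros x. exact (H (fun _ => x) x).
  - intros env. exact H.
Qed.

Lemma sat_in_functional :
  sat_sentence A (in_functional R) <-> forall x y z : A, edge R A y x -> edge R A z x -> y = z.
Proof.
  unfold sat_sentence, in_functional. cbn [sat]. setoid_rewrite sat_edge_atom.
  unfold update; simpl. split; intros H.
  - intros x. exact (H (fun _ => x) x).
  - intros env. exact H.
Qed.

Lemma sat_two_starts :
  sat_sentence A (two_starts R) <-> exists a b : A, a <> b /\ start R A a /\ start R A b.
Proof.
  unfold sat_sentence, two_starts. cbn [sat].
  setoid_rewrite sat_start_formula; [|lia ..]. unfold update; simpl.
  split; [intros H; exact (H (fun _ => dom_inh A)) | intros H env; exact H].
Qed.

Lemma sat_starts_have_paths n :
  sat_sentence A (starts_have_paths R n) <-> forall a : A, start R A a -> has_path n a.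
Proof.
  unfold sat_sentence, starts_have_paths. cbn [sat].
  setoid_rewrite sat_start_formula; [|lia]. setoid_rewrite sat_path_formula.
  unfold update; simpl.
  split; [intros H; exact (H (fun _ => dom_inh A)) | intros H env; exact H].
Qed.

Definition override {T : Type} (k : nat) (g env : nat -> T) : nat -> T :=
  fun j => if j <? k then g j else env j.

Lemma override_lt {T : Type} k (g env : nat -> T) j : j < k -> override k g env j = g j.
Proof. intros H; unfold override; apply Nat.ltb_lt in H; rewrite H; auto. Qed.

Lemma sat_forall_first k : forall (phi : formula s) env,
  sat A env (forall_first k phi) <-> forall g, sat A (override k g env) phi.
Proof.
  induction k as [|k IH]; intros phi env; simpl.
  - split; intros H; [intros g; replace (override 0 g env) with env; auto | apply (H env)].
  - rewrite IH. simpl. split; intros H g.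
    + specialize (H g (g k)).
      replace (override (S k) g env) with (update (override k g env) k (g k)); auto.
      extensionality j; unfold override, update.
      destruct (Nat.eqb_spec j k), (Nat.ltb_spec j k), (Nat.ltb_spec j (S k)); subst; auto; lia.
    + intros a. specialize (H (update g k a)).
      replace (update (override k g env) k a) with (override (S k) (update g k a) env); auto.
      extensionality j; unfold override, update.
      destruct (Nat.eqb_spec j k), (Nat.ltb_spec j k), (Nat.ltb_spec j (S k)); subst; auto; lia.
Qed.

Lemma rel_first_vars (r : sym s) (g env : nat -> A) :
  rel A r (fun i => override (arity s r) g env (first_vars _ i)) <->
  rel A r (fun i => g (proj1_sig i)).
Proof.
  split; apply rel_ext; intro j; unfold first_vars;
    rewrite override_lt; auto; apply (proj2_sig j).
Qed.

Lemma sat_shape_axiom i : 1 <= i < arity s R ->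
  (sat_sentence A (shape_axiom R i) <->
   forall g : nat -> A, rel A R (fun j => g (proj1_sig j)) -> g i = g 1).
Proof.
  intros Hi. unfold sat_sentence, shape_axiom.
  replace (andb (1 <=? i) (i <? arity s R)) with true
    by (symmetry; apply andb_true_intro; split; [apply Nat.leb_le | apply Nat.ltb_lt]; lia).
  setoid_rewrite sat_forall_first. cbn [sat]. setoid_rewrite rel_first_vars.
  split; intros H.
  - intros g Hg. specialize (H (fun _ => dom_inh A) g). rewrite !override_lt in H by lia. auto.
  - intros env g Hg. rewrite !override_lt by lia. auto.
Qed.

Lemma sat_empty_axiom (S0 : sym s) :
  sat_sentence A (empty_axiom (Some S0)) <->
  forall g : nat -> A, ~ rel A S0 (fun j => g (proj1_sig j)).
Proof.
  unfold sat_sentence, empty_axiom. setoid_rewrite sat_forall_first. cbn [sat].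
  setoid_rewrite rel_first_vars.
  split; [intros H; exact (H (fun _ => dom_inh A)) | intros H env; exact H].
Qed.

End TheorySemantics.

Section TheoryIsSentences.
Context {s : signature} (R : sym s).

Lemma free_edge_atom x j k : free x (edge_atom R j k) -> x = j \/ x = k.
Proof. unfold edge_atom; simpl. intros [i Hi]. unfold pat in Hi. destruct (Nat.eqb _ _); auto. Qed.

Lemma free_path_formula n : forall k x, free x (path_formula R n k) -> x = k.
Proof.
  induction n as [|n IH]; intros k x H; cbn [path_formula free] in H.
  - unfold FTrue in H; cbn [free] in H. destruct H.
  - destruct H as [H1 [H|H]]; [apply free_edge_atom in H | apply IH in H]; lia.
Qed.

Lemma free_forall_first k : forall (phi : formula s) x,
  free x (forall_first k phi) -> k <= x /\ free x phi.
Proof.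
  induction k as [|k IH]; intros phi x H; simpl in H.
  - split; auto; lia.
  - apply IH in H. destruct H as [H1 [H2 H3]]. split; auto; lia.
Qed.

Lemma free_first_vars k x (j : fin k) : first_vars k j = x -> x < k.
Proof. intros <-. apply (proj2_sig j). Qed.

Ltac no_free_vars := repeat match goal with
  | H : _ /\ _ |- _ => destruct H
  | H : _ \/ _ |- _ => destruct H
  | H : free _ (edge_atom _ _ _) |- _ => apply free_edge_atom in H
  | H : free _ (path_formula _ _ _) |- _ => apply free_path_formula in H
  | H : False |- _ => destruct H
  end; try lia.

Lemma out_functional_sentence : is_sentence (out_functional R).
Proof. intros x H. cbn [out_functional free] in H. no_free_vars. Qed.
Lemma in_functional_sentence : is_sentence (in_functional R).
Proof. intros x H. cbn [in_functional free] in H. no_free_vars. Qed.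
Lemma two_starts_sentence : is_sentence (two_starts R).
Proof. intros x H. cbn [two_starts start_formula free] in H. no_free_vars. Qed.
Lemma starts_have_paths_sentence n : is_sentence (starts_have_paths R n).
Proof. intros x H. cbn [starts_have_paths start_formula free] in H. no_free_vars. Qed.

Lemma shape_axiom_sentence i : is_sentence (shape_axiom R i).
Proof.
  intros x H. unfold shape_axiom in H.
  destruct (andb (1 <=? i) (i <? arity s R)) eqn:Ei; [|exact H].
  apply andb_prop in Ei as [E1 Ei]. apply Nat.leb_le in E1. apply Nat.ltb_lt in Ei.
  apply free_forall_first in H as [Hk H]. cbn [free] in H.
  destruct H as [[j Hj] | [H | H]]; [apply free_first_vars in Hj|..]; lia.
Qed.

Lemma empty_axiom_sentence (o : option (sym s)) : is_sentence (empty_axiom o).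
Proof.
  intros x H. destruct o as [S0|]; [|exact H]. cbn [empty_axiom] in H.
  apply free_forall_first in H as [Hk [j Hj]]. apply free_first_vars in Hj. lia.
Qed.

End TheoryIsSentences.

Section Enumeration.
Context {s : signature} (R : sym s) (enc : sym s -> nat).

Definition symbol_of (n : nat) : option (sym s) :=
  match excluded_middle_informative (exists S0, enc S0 = n /\ S0 <> R) with
  | left H => Some (proj1_sig (constructive_indefinite_description _ H))
  | right _ => None
  end.

Lemma symbol_of_enc (Henc : forall a b, enc a = enc b -> a = b) (S0 : sym s) :
  S0 <> R -> symbol_of (enc S0) = Some S0.
Proof.
  intros Hne. unfold symbol_of. destruct (excluded_middle_informative _) as [H|H].
  - destruct (constructive_indefinite_description _ H) as [S1 [H1 H2]]; simpl. f_equal; auto.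
  - exfalso; apply H; eauto.
Qed.

Lemma symbol_of_not_R n S0 : symbol_of n = Some S0 -> S0 <> R.
Proof.
  unfold symbol_of. destruct (excluded_middle_informative _) as [H|H]; [|discriminate].
  destruct (constructive_indefinite_description _ H) as [S1 [H1 H2]]; simpl.
  intros E; injection E; intros <-; auto.
Qed.

Definition basic_axiom (q : nat) : formula s :=
  match q with 0 => out_functional R | 1 => in_functional R | _ => two_starts R end.

Definition axiom (m : nat) : formula s :=
  match m mod 4 with
  | 0 => basic_axiom (m / 4)
  | 1 => starts_have_paths R (m / 4)
  | 2 => shape_axiom R (m / 4)
  | _ => empty_axiom (symbol_of (m / 4))
  end.

Lemma axiom_at q c : c < 4 ->
  axiom (4 * q + c) =
  match c with
  | 0 => basic_axiom q
  | 1 => starts_have_paths R q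
  | 2 => shape_axiom R q
  | _ => empty_axiom (symbol_of q)
  end.
Proof.
  intros Hc. unfold axiom.
  replace ((4 * q + c) mod 4) with c
    by (rewrite Nat.add_comm, Nat.mul_comm, Nat.Div0.mod_add, Nat.mod_small; auto).
  replace ((4 * q + c) / 4) with q
    by (rewrite Nat.mul_comm, Nat.div_add_l, Nat.div_small; lia).
  destruct c as [|[|[|c]]]; reflexivity.
Qed.

Lemma axiom_sentence m : is_sentence (axiom m).
Proof.
  unfold axiom. destruct (m mod 4) as [|[|[|c]]].
  - destruct (m / 4) as [|[|q]];
      [apply out_functional_sentence | apply in_functional_sentence | apply two_starts_sentence].
  - apply starts_have_paths_sentence.
  - apply shape_axiom_sentence.
  - apply empty_axiom_sentence.
Qed.

(** The rigid [cut_chain N] satisfies every axiom of index below [4 (N+1)]: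
    its start points 0 and [N+1] begin paths of length up to [N+1] and
    infinite ones, respectively. *)
Lemma cut_chain_axioms (HR : 2 <= arity s R) (N m : nat) :
  m / 4 <= N -> sat_sentence (cut_chain R N) (axiom m).
Proof.
  assert (Hedge : forall x y : nat, edge R (cut_chain R N) x y <-> y = S x /\ x <> N)
    by (intros x y; exact (edge_graph R HR 0 _ x y)).
  assert (Hpath : forall n (x : nat), x + n <= N \/ N < x -> has_path R (cut_chain R N) n x).
  { induction n as [|n IH]; intros x Hx; simpl; auto.
    exists (S x). split; [apply Hedge; lia | apply IH; lia]. }
  unfold axiom. generalize (m / 4) as q. intros q Hq.
  destruct (m mod 4) as [|[|[|c]]].
  - destruct q as [|[|q]]; cbn [basic_axiom].
    + apply sat_out_functional. intros x y z H1 H2. apply Hedge in H1, H2. lia.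
    + apply sat_in_functional. intros x y z H1 H2. apply Hedge in H1, H2. lia.
    + apply sat_two_starts. exists 0, (S N). split; [lia|].
      split; intros [y Hy]; apply Hedge in Hy; lia.
  - apply sat_starts_have_paths. intros a Ha. apply Hpath.
    destruct a as [|p]; [lia|].
    destruct (Nat.eq_dec p N) as [->|Hp]; [lia|].
    exfalso; apply Ha; exists p. apply Hedge. auto.
  - destruct (andb (1 <=? q) (q <? arity s R)) eqn:Eq.
    2: unfold shape_axiom; rewrite Eq; apply sat_FTrue.
    apply andb_prop in Eq as [E1 E2]. apply Nat.leb_le in E1. apply Nat.ltb_lt in E2.
    apply sat_shape_axiom; [lia|]. intros g (x & y & Hp & _ & _).
    pose proof (Hp (exist (fun i => i < arity s R) q E2)) as Hq1.
    pose proof (Hp (pos1 HR)) as Hq2. unfold pat in Hq1, Hq2; simpl in Hq1, Hq2.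
    destruct q as [|q]; [lia|]. simpl in Hq1. congruence.
  - destruct (symbol_of q) as [S0|] eqn:ES; [|apply sat_FTrue].
    apply sat_empty_axiom. intros g (x & y & _ & HS & _). exact (symbol_of_not_R q S0 ES HS).
Qed.

End Enumeration.

Lemma axioms_graph_like {s : signature} {R : sym s} (HR : 2 <= arity s R) (A : structure s) :
  (forall i, 1 <= i < arity s R ->
     forall g : nat -> A, rel A R (fun j => g (proj1_sig j)) -> g i = g 1) ->
  (forall S0, S0 <> R -> forall g : nat -> A, ~ rel A S0 (fun j => g (proj1_sig j))) ->
  graph_like R HR A.
Proof.
  intros Hshape Hempty.
  set (extend := fun k (t : fin k -> A) (j : nat) =>
    match lt_dec j k with left h => t (exist _ j h) | right _ => dom_inh A end).
  assert (Hextend : forall k (t : fin k -> A) j, extend k t (proj1_sig j) = t j).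
  { intros k t j. unfold extend. destruct (lt_dec _ _) as [h|h].
    - f_equal. apply fin_eq. auto.
    - exfalso. apply h, (proj2_sig j). }
  assert (Hrel : forall r (t : fin (arity s r) -> A),
             rel A r t -> rel A r (fun j => extend _ t (proj1_sig j)))
    by (intros r t; apply rel_ext; intro j; rewrite Hextend; reflexivity).
  split.
  - intros t Ht j. unfold pat. destruct (Nat.eqb_spec (proj1_sig j) 0) as [Ej|Ej].
    + f_equal. apply fin_eq. auto.
    + pose proof (proj2_sig j) as Hj; cbv beta in Hj.
      rewrite <- (Hextend _ t j), <- (Hextend _ t (pos1 HR)).
      apply (Hshape (proj1_sig j)); [lia | apply Hrel, Ht].
  - intros r Hr t Ht. exact (Hempty r Hr _ (Hrel r t Ht)).
Qed.

Section Swap.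
Context {T : Type} (c1 c2 : nat -> T).
Hypothesis (inj1 : forall i j, c1 i = c1 j -> i = j) (inj2 : forall i j, c2 i = c2 j -> i = j)
  (disj : forall i j, c1 i <> c2 j).

Definition swap (x : T) : T :=
  match excluded_middle_informative (exists i, c1 i = x) with
  | left H => c2 (proj1_sig (constructive_indefinite_description _ H))
  | right _ =>
    match excluded_middle_informative (exists i, c2 i = x) with
    | left H => c1 (proj1_sig (constructive_indefinite_description _ H))
    | right _ => x
    end
  end.

Lemma swap_first i : swap (c1 i) = c2 i.
Proof.
  unfold swap. destruct (excluded_middle_informative _) as [H|H].
  - destruct (constructive_indefinite_description _ H) as [j Hj]; simpl. f_equal; auto.
  - exfalso; eauto.
Qed.

Lemma swap_second i : swap (c2 i) = c1 i.
Proof.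
  unfold swap. destruct (excluded_middle_informative _) as [[j Hj]|H].
  - exfalso; eapply disj; eauto.
  - destruct (excluded_middle_informative _) as [H'|H'].
    + destruct (constructive_indefinite_description _ H') as [j Hj]; simpl. f_equal; auto.
    + exfalso; eauto.
Qed.

Lemma swap_other x : ~ (exists i, c1 i = x) -> ~ (exists i, c2 i = x) -> swap x = x.
Proof.
  intros H1 H2. unfold swap.
  destruct (excluded_middle_informative _); [tauto|].
  destruct (excluded_middle_informative _); tauto.
Qed.

Lemma swap_involutive x : swap (swap x) = x.
Proof.
  destruct (classic (exists i, c1 i = x)) as [[i <-]|H1].
  - rewrite swap_first, swap_second; auto.
  - destruct (classic (exists i, c2 i = x)) as [[i <-]|H2].
    + rewrite swap_second, swap_first; auto.
    + rewrite (swap_other x H1 H2). apply swap_other; auto.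
Qed.

End Swap.

Section Chains.
Context {s : signature} (R : sym s) (A : structure s).
Hypothesis (Hout : forall x y z : A, edge R A x y -> edge R A x z -> y = z)
  (Hin : forall x y z : A, edge R A y x -> edge R A z x -> y = z)
  (Hpaths : forall n (a : A), start R A a -> has_path R A n a).

Definition successor (x : A) : A := epsilon (inhabits x) (fun y => edge R A x y).

Fixpoint chain (a0 : A) (n : nat) : A :=
  match n with 0 => a0 | S n => successor (chain a0 n) end.

Lemma chain_has_paths (a0 : A) : start R A a0 -> forall k n, has_path R A n (chain a0 k).
Proof.
  intros Ha0 k. induction k as [|k IH]; intros n; [apply Hpaths; auto|].
  destruct (IH (S n)) as (y & Hy & Hyn). cbn [chain].
  assert (Hs : edge R A (chain a0 k) (successor (chain a0 k)))
    by (unfold successor; apply epsilon_spec; eauto).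
  rewrite <- (Hout _ _ _ Hy Hs). exact Hyn.
Qed.

Lemma chain_edge (a0 : A) : start R A a0 -> forall k, edge R A (chain a0 k) (chain a0 (S k)).
Proof.
  intros Ha0 k. destruct (chain_has_paths a0 Ha0 k 1) as (y & Hy & _).
  cbn [chain]. unfold successor. apply epsilon_spec. eauto.
Qed.

(** Chains from start points meet only at equal positions of the same chain:
    by injectivity of edges, trace back to the start points. *)
Lemma chains_meet (a0 b0 : A) : start R A a0 -> start R A b0 ->
  forall i j, chain a0 i = chain b0 j -> i = j /\ a0 = b0.
Proof.
  intros Ha0 Hb0 i. induction i as [|i IH]; intros [|j] Hij.
  - auto.
  - exfalso. apply Ha0. exists (chain b0 j). cbn [chain] in Hij. rewrite Hij.
    apply (chain_edge b0 Hb0 j).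
  - exfalso. apply Hb0. exists (chain a0 i). cbn [chain] in Hij. rewrite <- Hij.
    apply (chain_edge a0 Ha0 i).
  - assert (Hp : chain a0 i = chain b0 j).
    { apply (Hin (chain a0 (S i))); [apply chain_edge; auto|].
      rewrite Hij. apply chain_edge; auto. }
    destruct (IH j Hp). split; auto.
Qed.

Lemma chain_injective (a0 : A) : start R A a0 -> forall i j, chain a0 i = chain a0 j -> i = j.
Proof. intros Ha0 i j H. apply (chains_meet a0 a0 Ha0 Ha0 i j H). Qed.

Lemma chains_disjoint (a b : A) : a <> b -> start R A a -> start R A b ->
  forall i j, chain a i <> chain b j.
Proof. intros Hab Ha Hb i j H. apply Hab, (chains_meet a b Ha Hb i j H). Qed.

(** Exchanging the chains of two distinct start points preserves edges; the
    points off both chains are not connected to them by edges. *)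
Lemma swap_chains_edge (a b : A) : a <> b -> start R A a -> start R A b ->
  forall x y, edge R A x y -> edge R A (swap (chain a) (chain b) x) (swap (chain a) (chain b) y).
Proof.
  intros Hab Ha Hb.
  pose proof (chain_injective a Ha) as inj1. pose proof (chain_injective b Hb) as inj2.
  pose proof (chains_disjoint a b Hab Ha Hb) as disj.
  assert (Hoff : forall a0 x y, start R A a0 -> edge R A x y -> ~ (exists i, chain a0 i = x) ->
                   ~ (exists j, chain a0 j = y)).
  { intros a0 x y Ha0 Hxy Hx [[|j] Hj].
    - apply Ha0. exists x. cbn [chain] in Hj. rewrite Hj. exact Hxy.
    - apply Hx. exists j. apply (Hin y); [rewrite <- Hj; apply chain_edge | ]; auto. }
  intros x y Hxy.
  destruct (classic (exists i, chain a i = x)) as [[i <-]|H1];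
    [|destruct (classic (exists i, chain b i = x)) as [[i <-]|H2]].
  - rewrite (Hout _ _ _ Hxy (chain_edge a Ha i)), !swap_first; auto. apply chain_edge; auto.
  - rewrite (Hout _ _ _ Hxy (chain_edge b Hb i)), !swap_second; auto. apply chain_edge; auto.
  - rewrite !swap_other; eauto.
Qed.

End Chains.

(** A model of all the axioms has two disjoint infinite chains; exchanging
    them is an automorphism moving infinitely many points. *)
Lemma axiom_model_not_in_class {s : signature} {R : sym s} (HR : 2 <= arity s R)
  (enc : sym s -> nat) (Henc : forall a b, enc a = enc b -> a = b)
  (X : nat -> Prop) (A : structure s) :
  (forall m, sat_sentence A (axiom R enc m)) -> ~ aut_supports_in X A.
Proof.
  intros Hax HP.
  assert (Hax' : forall q c, c < 4 -> sat_sentence A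
    (match c with
     | 0 => basic_axiom R q
     | 1 => starts_have_paths R q
     | 2 => shape_axiom R q
     | _ => empty_axiom (symbol_of R enc q)
     end)) by (intros q c Hc; rewrite <- axiom_at; auto).
  assert (Hout := proj1 (sat_out_functional R A) (Hax' 0 0 ltac:(lia))).
  assert (Hin := proj1 (sat_in_functional R A) (Hax' 1 0 ltac:(lia))).
  assert (Htwo := proj1 (sat_two_starts R A) (Hax' 2 0 ltac:(lia))).
  assert (Hpaths : forall n, forall a, start R A a -> has_path R A n a)
    by (intros n; apply sat_starts_have_paths, (Hax' n 1); lia).
  assert (Hgraph : graph_like R HR A).
  { apply axioms_graph_like.
    - intros i Hi. apply sat_shape_axiom; [exact Hi|].
      exact (Hax' i 2 ltac:(lia)).
    - intros S0 HS0. apply sat_empty_axiom.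
      pose proof (Hax' (enc S0) 3 ltac:(lia)) as H.
      rewrite (symbol_of_enc R enc Henc S0 HS0) in H. exact H. }
  destruct Htwo as (a & b & Hab & Ha & Hb).
  set (f := swap (chain R A a) (chain R A b)).
  pose proof (chain_injective R A Hout Hin Hpaths a Ha) as inj1.
  pose proof (chain_injective R A Hout Hin Hpaths b Hb) as inj2.
  pose proof (chains_disjoint R A Hout Hin Hpaths a b Hab Ha Hb) as disj.
  assert (Haut : automorphism A f).
  { apply (graph_like_involution R HR A f Hgraph).
    - intros x. apply swap_involutive; auto.
    - apply (swap_chains_edge R A Hout Hin Hpaths a b Hab Ha Hb). }
  destruct (HP f Haut) as (n & _ & Hcard).
  refine (support_not_finite f (chain R A a) inj1 _ n Hcard).
  intros i. unfold f. rewrite swap_first; auto.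
Qed.

(** The countable theory consisting of a
    sentence expressing the class together with all the axioms has no model,
    while each finite part holds in some rigid [cut_chain N]. *)
Lemma not_aleph0_compact {s : signature} (Hcount : countable_sig s) {R : sym s}
  (HR : 2 <= arity s R) (X : nat -> Prop) (H0 : X 0) (L : abstract_logic s)
  (HL : L_ge_FO L) (Hexp : L_expressible L (@aut_supports_in s X)) : ~ aleph0_compact L.
Proof.
  destruct Hcount as [enc Henc]. destruct Hexp as [psi Hpsi].
  (* an [L]-sentence equivalent to a given first-order sentence *)
  set (of_FO := fun phi => epsilon (inhabits psi)
                  (fun ps => forall A, lsat L A ps <-> sat_sentence A phi)).
  assert (Hof_FO : forall phi, is_sentence phi ->
                     forall A, lsat L A (of_FO phi) <-> sat_sentence A phi).
  { intros phi Hs. apply (epsilon_spec (inhabits psi)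
      (fun ps => forall A, lsat L A ps <-> sat_sentence A phi)).
    apply (HL (fun A => sat_sentence A phi)). exists phi; split; auto. tauto. }
  set (theory := fun m => match m with 0 => psi | S m => of_FO (axiom R enc m) end).
  intros Hcompact. destruct (Hcompact (fun ps => exists m, theory m = ps)) as [A HA].
  - exists theory. eauto.
  - intros l Hl.
    assert (HN : exists N, forall ph, In ph l -> exists m, m <= N /\ theory m = ph).
    { clear Hcompact. induction l as [|ph l IH]; [exists 0; simpl; tauto|].
      destruct IH as [N HN]; [intros; apply Hl; simpl; auto|].
      destruct (Hl ph (or_introl eq_refl)) as [m Hm].
      exists (N + m). intros ph' [<-|H'].
      + exists m; split; [lia | auto].
      + destruct (HN ph' H') as (m' & Hm' & E'). exists m'; split; [lia | auto]. }
    destruct HN as [N HN]. exists (cut_chain R N). intros ph Hph.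
    destruct (HN ph Hph) as ([|m] & Hm & <-); simpl.
    + apply Hpsi, rigid_aut_supports_in, cut_chain_rigid; auto.
    + apply Hof_FO; [apply axiom_sentence|]. apply (cut_chain_axioms R enc HR).
      pose proof (Nat.Div0.div_le_upper_bound m 4 m ltac:(lia)). lia.
  - apply (axiom_model_not_in_class HR enc Henc X A).
    + intros m. apply (Hof_FO _ (axiom_sentence R enc m)). apply HA. exists (S m). auto.
    + apply Hpsi, HA. exists 0. auto.
Qed.

(** * Proof systems and compactness

    A sound and complete proof system for a logic containing a false
    sentence makes it compact: an unsatisfiable theory entails falsity, and
    the finitely many premisses of a proof of falsity are unsatisfiable. *)
Lemma compact_of_proof_system {s : signature} (L : abstract_logic s) (HL : L_ge_FO L)
  (PS : proof_system L) : ps_sound PS -> ps_complete PS -> aleph0_compact L.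
Proof.
  intros Hsound Hcomplete G _ Hfin.
  destruct (HL (fun _ => False)) as [bot Hbot].
  { exists (FFalse s). split; [intros x H; exact H|].
    intros A; split; [intros H; apply (H (fun _ => dom_inh A)) | tauto]. }
  apply NNPP. intros Hunsat.
  destruct (Hcomplete G bot) as (pi & Hconcl & Hprem).
  { intros A HA. exfalso; apply Hunsat. exists A; auto. }
  destruct (Hfin (premisses PS pi) Hprem) as [A HA].
  apply (Hbot A). rewrite <- Hconcl. apply (Hsound pi A HA).
Qed.

Theorem mainTheorem7 (s : signature) (Hcount : countable_sig s)
  (Q R : sym s) (HQR : Q <> R) (HR : 2 <= arity s R)
  (X : nat -> Prop)
  (HM : exists M : structure s,
          (forall t : fin (arity s Q) -> M, ~ rel M Q t) /\ aut_supports_in X M) :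
  ~ FO_expressible (@aut_supports_in s X) /\
  (forall L : abstract_logic s, L_ge_FO L -> L_expressible L (@aut_supports_in s X) ->
     ~ aleph0_compact L) /\
  (forall L : abstract_logic s, L_ge_FO L -> L_expressible L (@aut_supports_in s X) ->
     closed_neg L ->
     forall PS : proof_system L, ~ (ps_sound PS /\ ps_complete PS)).
Proof.
  destruct HM as [M [_ HMX]].
  pose proof (X_contains_0 X M HMX) as H0.
  split; [|split].
  - exact (not_FO_expressible HR X H0).
  - intros L HL Hexp. exact (not_aleph0_compact Hcount HR X H0 L HL Hexp).
  - intros L HL Hexp _ PS [Hsound Hcomplete].
    apply (not_aleph0_compact Hcount HR X H0 L HL Hexp).
    exact (compact_of_proof_system L HL PS Hsound Hcomplete).
Qed.
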